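(* Let $u\neq v$ be vertices of $T$ such that $u$ is either an ancestor or a descendant of $v$. Let $u'$ be the vertex reached after executing the routing steps of Case 1 (if $u$ is an ancestor of $v$) or of Case 2 (if $u$ is a descendant of $v$) when routing from $u$ to $v$. Then: (1) If $S_u$ is a proper prefix of $S_v$, then $|S_{u'}|>|S_u|$; moreover, either $S_{u'}=S_v$ or $S_{u'}$ is a proper prefix of $S_v$. (2) If $S_v$ is a proper prefix of $S_u$, then $|S_{u'}|<|S_u|$; moreover, either $S_{u'}=S_v$ or $S_v$ is a proper prefix of $S_{u'}$. (3) Suppose the longest common prefix $S$ of $S_u$ and $S_v$ has length $m<\min\{|S_u|,|S_v|\}$. Then $|S_{u'}|<|S_u|$; moreover, either $S_{u'}=S$ or $S$ is a proper prefix of $S_{u'}$.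
   Context: Let $T$ be a rooted tree on $n$ vertices with positive edge weights. Ancestor/descendant refer to $T$, and a vertex counts as its own ancestor and descendant; ''deepest''/''highest'' refer to depth in $T$. $T_v$ is the subtree of $T$ rooted at $v$. For every non-leaf vertex $v$ fix a child $c_1(v)$ with $|T_{c_1(v)}|$ maximal; edges $(v,c_1(v))$ are leftmost. A subtree $R$ of $T$ is rooted at its vertex closest to the root, $rt(R)$, and inherits the leftmost labelling; $R_v$ is the subtree of $R$ rooted at $v$. $P_R(v)$ is the longest downward path from $v$ in $R$ using only leftmost edges, with last vertex $l(v)$; $l(R):=l(rt(R))$. A vertex $v$ of $R$ is $d$-balanced if $|R_{c_1(v)}|\le |R|-d$ (with $|R_{c_1(v)}|=0$ if $c_1(v)$ is undefined or not in $R$); $b_d(v)$ is the first $d$-balanced vertex on $P_R(v)$, or NULL. $CV(R,d)=\emptyset$ if $b_d(rt(R))$ is NULL, else $\{b\}\cup\bigcup_w CV(R_w,d)$ with $b=b_d(rt(R))$ and $w$ ranging over children of $b$ in $R$. Fix an integer $k\ge4$; for a subtree $R$ with $m$ vertices, $C_R=V(R)$ if $k\ge m/2-1$, else $C_R=CV(R,m/k)\cup\{l(R),rt(R)\}$. Canonical subtrees: $T$ is canonical; if $R$ is canonical, each component of $R$ minus $C_R$ is canonical. Each vertex $v$ lies in $C_R$ for exactly one canonical $R$, denoted $T^v$. Canonical sequences: $T$ is assigned the empty integer sequence; if a canonical subtree $R$ has been assigned the sequence $S$ and the components of $R$ minus $C_R$ are $R_1,\dots,R_p$ (in some fixed order),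 then $R_j$ is assigned $S$ followed by $j$. $S_v$ denotes the sequence assigned to $T^v$. Routing steps: Case 1 ($u$ an ancestor of $v$): let $X$ be the vertices of $C_{T^u}$ that are ancestors of $v$ and $x$ the deepest; move to $x$, then to the child of $x$ that is an ancestor of $v$. Case 2 ($u$ a descendant of $v$): let $X$ be the vertices of $C_{T^u}$ that are descendants of $v$ and ancestors of $u$ and $x$ the highest; move to $x$, then to the parent of $x$. (Moving to the current vertex means staying.) *)

From mathcomp Require Import all_boot.
Set Implicit Arguments. Unset Strict Implicit. Unset Printing Implicit Defensive.

Definition is_tree (n : nat) (root : 'I_n) (parent : 'I_n -> 'I_n) : Prop :=
  parent root = root /\ forall v, iter n parent v = root.

Definition anc n (parent : 'I_n -> 'I_n) (u v : 'I_n) : bool :=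
  has (fun i => iter i parent v == u) (iota 0 n).

Definition child n (parent : 'I_n -> 'I_n) (w v : 'I_n) : bool :=
  (parent w == v) && (w != v).

Definition haschild n (parent : 'I_n -> 'I_n) (v : 'I_n) : bool :=
  [exists w, child parent w v].

Definition subT n (parent : 'I_n -> 'I_n) (v : 'I_n) : {set 'I_n} :=
  [set w | anc parent v w].

Definition subR n (parent : 'I_n -> 'I_n) (R : {set 'I_n}) (v : 'I_n) : {set 'I_n} :=
  R :&: subT parent v.

Definition leftmost_ok n (parent c1 : 'I_n -> 'I_n) : Prop :=
  forall v, haschild parent v ->
    child parent (c1 v) v /\
    forall w, child parent w v -> #|subT parent w| <= #|subT parent (c1 v)|.

(* rt(R): the vertex of R that is an ancestor of all of R (root as dummy default). *)
Definition rt n (root : 'I_n) (parent : 'I_n -> 'I_n) (R : {set 'I_n}) : 'I_n :=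
  odflt root [pick v in R | [forall w in R, anc parent v w]].

Definition lnext n (parent c1 : 'I_n -> 'I_n) (R : {set 'I_n}) (v : 'I_n) : option 'I_n :=
  if haschild parent v && (c1 v \in R) then Some (c1 v) else None.

Definition sizeR_c1 n (parent c1 : 'I_n -> 'I_n) (R : {set 'I_n}) (v : 'I_n) : nat :=
  if haschild parent v && (c1 v \in R) then #|subR parent R (c1 v)| else 0.

(* v is d-balanced in R, for d = num/den (den > 0):
   |R_{c1 v}| <= |R| - num/den  <->  den*|R_{c1 v}| + num <= den*|R| *)
Definition balanced n (parent c1 : 'I_n -> 'I_n) (num den : nat)
  (R : {set 'I_n}) (v : 'I_n) : bool :=
  den * sizeR_c1 parent c1 R v + num <= den * #|R|.

Fixpoint firstbal n (parent c1 : 'I_n -> 'I_n) (num den : nat)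
  (R : {set 'I_n}) (f : nat) (v : 'I_n) : option 'I_n :=
  match f with
  | 0 => None
  | f'.+1 =>
    if v \notin R then None
    else if balanced parent c1 num den R v then Some v
    else match lnext parent c1 R v with
         | Some w => firstbal parent c1 num den R f' w
         | None => None
         end
  end.

Fixpoint lastl n (parent c1 : 'I_n -> 'I_n) (R : {set 'I_n}) (f : nat) (v : 'I_n) : 'I_n :=
  match f with
  | 0 => v
  | f'.+1 => match lnext parent c1 R v with
             | Some w => lastl parent c1 R f' w
             | None => v
             end
  end.

Definition lR n (root : 'I_n) (parent c1 : 'I_n -> 'I_n) (R : {set 'I_n}) : 'I_n :=
  lastl parent c1 R n (rt root parent R).

(* CV(R, num/den), by recursion with fuel (fuel #|R| suffices: children's
   subtrees are strictly smaller). *)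
Fixpoint CVf n (root : 'I_n) (parent c1 : 'I_n -> 'I_n) (num den : nat)
  (f : nat) (R : {set 'I_n}) : {set 'I_n} :=
  match f with
  | 0 => set0
  | f'.+1 =>
    match firstbal parent c1 num den R n (rt root parent R) with
    | None => set0
    | Some b => b |: \bigcup_(w in R | child parent w b)
                        CVf root parent c1 num den f' (subR parent R w)
    end
  end.

Definition CV n (root : 'I_n) (parent c1 : 'I_n -> 'I_n) (num den : nat)
  (R : {set 'I_n}) : {set 'I_n} :=
  CVf root parent c1 num den #|R| R.

(* C_R:  k >= m/2 - 1  <->  m <= 2k+2 ;  d = m/k *)
Definition CR n (root : 'I_n) (parent c1 : 'I_n -> 'I_n) (k : nat)
  (R : {set 'I_n}) : {set 'I_n} :=
  let m := #|R| in
  if m <= 2 * k + 2 then R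
  else CV root parent c1 m k R :|: [set lR root parent c1 R; rt root parent R].

Definition adj n (parent : 'I_n -> 'I_n) (x y : 'I_n) : bool :=
  child parent x y || child parent y x.

Definition relA n (parent : 'I_n -> 'I_n) (A : {set 'I_n}) : rel 'I_n :=
  fun x y => [&& x \in A, y \in A & adj parent x y].

Definition comps n (parent : 'I_n -> 'I_n) (A : {set 'I_n}) : {set {set 'I_n}} :=
  [set [set y | connect (relA parent A) x y] | x in A].

Inductive canonical n (root : 'I_n) (parent c1 : 'I_n -> 'I_n) (k : nat) :
  {set 'I_n} -> Prop :=
| canT : canonical root parent c1 k setT
| canC (R X : {set 'I_n}) :
    canonical root parent c1 k R ->
    X \in comps parent (R :\: CR root parent c1 k R) ->
    canonical root parent c1 k X.

Definition ord_ok n (root : 'I_n) (parent c1 : 'I_n -> 'I_n) (k : nat)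
  (ord : {set 'I_n} -> seq {set 'I_n}) : Prop :=
  forall R, canonical root parent c1 k R ->
    uniq (ord R) /\
    forall X, (X \in ord R) = (X \in comps parent (R :\: CR root parent c1 k R)).

(* seqOf R S : canonical subtree R is assigned the sequence S
   (the j-th component, 1-based, gets S followed by j) *)
Inductive seqOf n (root : 'I_n) (parent c1 : 'I_n -> 'I_n) (k : nat)
  (ord : {set 'I_n} -> seq {set 'I_n}) : {set 'I_n} -> seq nat -> Prop :=
| seqT : seqOf root parent c1 k ord setT [::]
| seqC (R X : {set 'I_n}) (S : seq nat) :
    seqOf root parent c1 k ord R S ->
    X \in comps parent (R :\: CR root parent c1 k R) ->
    seqOf root parent c1 k ord X (rcons S (index X (ord R)).+1).

(* routing steps; X = C_{T^u} *)
Definition case1 n (parent : 'I_n -> 'I_n) (X : {set 'I_n}) (u v u' : 'I_n) : Prop :=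
  exists x, [/\ x \in X, anc parent x v,
            (forall y, y \in X -> anc parent y v -> anc parent y x),
            child parent u' x & anc parent u' v].

Definition case2 n (parent : 'I_n -> 'I_n) (X : {set 'I_n}) (u v u' : 'I_n) : Prop :=
  exists x, [/\ x \in X, anc parent v x, anc parent x u,
            (forall y, y \in X -> anc parent v y -> anc parent y u -> anc parent x y)
            & u' = parent x].

Definition route n (parent : 'I_n -> 'I_n) (X : {set 'I_n}) (u v u' : 'I_n) : Prop :=
  if anc parent u v then case1 parent X u v u'
  else if anc parent v u then case2 parent X u v u'
  else False.

Definition pprefix (s t : seq nat) : bool := prefix s t && (s != t).

Fixpoint lcp (s t : seq nat) : seq nat :=
  match s, t with
  | a :: s', b :: t' => if a == b then a :: lcp s' t' else [::]
  | _, _ => [::]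
  end.

(* Canonical subtrees are nested along their sequences: the subtree assigned
   S ++ [:: j] is a component of R minus C_R, where R is assigned S.  Hence two
   canonical subtrees sharing a vertex have comparable sequences, and S_w is the
   sequence of any canonical R with w in C_R.  Every canonical R is connected,
   contains rt(R) in C_R, and is left downwards only from l(R).
   The routing step moves from the last vertex of C_{T^u} on the tree path
   towards v to its neighbour u' on that path.  If v is outside T^u, then u'
   crosses the boundary of T^u, so it lies in C of a strictly enclosing canonical
   subtree, yet it stays on the path from u to v and hence inside every canonical
   subtree containing both.  If v is inside T^u, then u' lies in the component Y
   of T^u minus C_{T^u} that contains v, as rt(Y) (Case 1) or l(Y) (Case 2); so
   u' is in C_Y and S_{u'} extends S_u by one entry. *)

From mathcomp Require Import all_boot.
Set Implicit Arguments. Unset Strict Implicit. Unset Printing Implicit Defensive.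

Section Prefixes.
Variable T : eqType.
Implicit Types s t a b : seq T.

Lemma prefix_antisym s t : prefix s t -> prefix t s -> s = t.
Proof.
move=> st ts; have Es : size s = size t by apply/eqP; rewrite eqn_leq !size_prefix.
by move: st; rewrite prefixE Es take_size => /eqP.
Qed.

Lemma prefix_total a b s : prefix a s -> prefix b s -> prefix a b || prefix b a.
Proof.
rewrite ![prefix _ s]prefixE => /eqP Ea /eqP Eb.
case: (leqP (size a) (size b)) => ab; apply/orP; [left | right].
  by rewrite prefixE -Eb take_takel // Ea.
by rewrite prefixE -Ea take_takel ?Eb // ltnW.
Qed.

Lemma prefix_rcons_case s t x : prefix s (rcons t x) -> s = rcons t x \/ prefix s t.
Proof.
case/prefixP=> r; case/lastP: r => [|r y] E; first by left; rewrite E cats0.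
by right; move: E; rewrite -rcons_cat => /rcons_inj [-> _]; apply: prefix_prefix.
Qed.

End Prefixes.

Lemma pprefix_size (s t : seq nat) : pprefix s t -> size s < size t.
Proof.
case/andP=> /prefixP [[|x r] ->]; first by rewrite cats0 eqxx.
by rewrite size_cat addnS ltnS leq_addr.
Qed.

Lemma lcp_prefix (s t : seq nat) : prefix (lcp s t) s && prefix (lcp s t) t.
Proof.
elim: s t => [|a s IH] [|b t] //=; case: eqP => [<-|_] //=.
by rewrite !eqxx /=; case/andP: (IH t) => -> ->.
Qed.

Lemma lcp_prefixE (s t : seq nat) : prefix s t -> lcp s t = s.
Proof. by elim: s t => [|a s IH] [|b t] //= /andP [/eqP -> /IH ->]; rewrite eqxx. Qed.

Lemma lcp_diverge (s t : seq nat) : ~~ prefix s t -> ~~ prefix t s ->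
  exists a b s' t', [/\ a != b, s = lcp s t ++ a :: s' & t = lcp s t ++ b :: t'].
Proof.
elim: s t => [|a s IH] [|b t] //= st ts.
case: eqVneq => [Eab|ab]; last by exists a, b, s, t.
move: st ts; rewrite Eab eqxx /= => st ts.
have [x [y [s' [t' [xy Es Et]]]]] := IH t st ts.
by exists x, y, s', t'; rewrite -Es -Et.
Qed.

Section Tree.
Variables (n : nat) (root : 'I_n) (parent : 'I_n -> 'I_n).
Hypothesis tree : is_tree root parent.
Implicit Types (a b c v w x y z : 'I_n) (A R X Y : {set 'I_n}).

Local Notation anc := (anc parent).
Local Notation child := (child parent).
Local Notation adj := (adj parent).

Lemma parent_root : parent root = root.
Proof. by case: tree. Qed.

Lemma iter_parent_root i : iter i parent root = root.
Proof. by elim: i => //= i ->; apply: parent_root. Qed.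

Lemma iter_parent_ge i v : n <= i -> iter i parent v = root.
Proof. by case: tree => _ Hn ni; rewrite -(subnK ni) iterD Hn iter_parent_root. Qed.

Lemma iter_parent_cycle m x : 0 < m -> iter m parent x = x -> x = root.
Proof.
move=> m_gt0 Hx; have Hj j : iter (j * m) parent x = x.
  by elim: j => //= j IH; rewrite mulSn iterD IH Hx.
by rewrite -(Hj n) iter_parent_ge // leq_pmulr.
Qed.

(* Among the n + 1 vertices iter 0 v, ..., iter n v two coincide, and a repeated
   vertex lies on a cycle of [parent], which only the root does. *)
Lemma iter_parent_root_lt v : exists2 i, i < n & iter i parent v = root.
Proof.
have : ~~ injectiveb (fun i : 'I_n.+1 => iter i parent v).
  by apply/negP=> /injectiveP /leq_card; rewrite !card_ord ltnn.
case/injectivePn=> i [j ij Eij].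
wlog lt_ij : i j ij Eij / i < j.
  move=> IH; case: (ltngtP i j) => [|lt_ji|/val_inj Eq]; first exact: IH.
  - by apply: (IH j i); rewrite // eq_sym.
  - by rewrite Eq eqxx in ij.
exists i; first by rewrite (leq_trans lt_ij) // -ltnS.
apply: (@iter_parent_cycle (j - i)); first by rewrite subn_gt0.
by rewrite -iterD subnK 1?Eij // ltnW.
Qed.

Lemma ancP a b : reflect (exists i, iter i parent b = a) (anc a b).
Proof.
apply: (iffP hasP) => [[i _ /eqP <-]|[i Ei]]; first by exists i.
case: (ltnP i n) => [lt_in|le_ni]; first by exists i; rewrite ?mem_iota ?Ei.
have [j lt_jn Ej] := iter_parent_root_lt b.
by exists j; rewrite ?mem_iota // Ej -Ei iter_parent_ge.
Qed.

Lemma anc_refl a : anc a a.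
Proof. by apply/ancP; exists 0. Qed.

Lemma anc_trans a b c : anc a b -> anc b c -> anc a c.
Proof. by move=> /ancP [i <-] /ancP [j <-]; apply/ancP; exists (i + j); rewrite iterD. Qed.

Lemma anc_root b : anc root b.
Proof. by apply/ancP; exists n; rewrite iter_parent_ge. Qed.

Lemma anc_parent b : anc (parent b) b.
Proof. by apply/ancP; exists 1. Qed.

Lemma anc_antisym a b : anc a b -> anc b a -> a = b.
Proof.
move=> /ancP [i Ei] /ancP [j Ej].
have Ea : iter (i + j) parent a = a by rewrite iterD Ej.
case: (posnP (i + j)) => [/eqP|ij_gt0].
  by rewrite addn_eq0 => /andP [/eqP i0 _]; rewrite -Ei i0.
by rewrite -Ei -Ej (iter_parent_cycle ij_gt0 Ea) !iter_parent_root.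
Qed.

Lemma anc_total a b y : anc a y -> anc b y -> anc a b || anc b a.
Proof.
move=> /ancP [i Ei] /ancP [j Ej]; apply/orP.
case: (leqP i j) => ij; [right | left]; apply/ancP.
  by exists (j - i); rewrite -Ei -iterD subnK.
by exists (i - j); rewrite -Ej -iterD subnK // ltnW.
Qed.

Lemma anc_parent_neq a b : anc a b -> a != b -> anc a (parent b).
Proof.
by case/ancP=> [[|i] <-] //=; rewrite ?eqxx // => _; apply/ancP; exists i; rewrite -iterSr.
Qed.

Lemma anc_of_parent a b : anc a (parent b) -> anc a b.
Proof. by move/anc_trans; apply; apply: anc_parent. Qed.

Lemma anc_parent_self x : anc x (parent x) -> x = root.
Proof. by move=> xp; apply: (@iter_parent_cycle 1); rewrite //= -(anc_antisym xp (anc_parent x)). Qed.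

Lemma anc_root_eq a : anc a root -> a = root.
Proof. by move/anc_antisym; apply; apply: anc_root. Qed.

Lemma child_parent c y : child c y -> parent c = y.
Proof. by case/andP=> /eqP. Qed.

Lemma child_neq c y : child c y -> c != y.
Proof. by case/andP. Qed.

Lemma child_anc c y : child c y -> anc y c.
Proof. by move/child_parent <-; apply: anc_parent. Qed.

Lemma child_nanc c y : child c y -> ~~ anc c y.
Proof.
move=> cy; apply/negP; rewrite -(child_parent cy) => /anc_parent_self Ec.
by move: (child_neq cy); rewrite -(child_parent cy) Ec parent_root eqxx.
Qed.

Lemma child_neq_root c y : child c y -> c != root.
Proof. by move=> cy; apply: contraNneq (child_nanc cy) => ->; apply: anc_root. Qed.

Lemma parent_child c : c != root -> child c (parent c).
Proof.
move=> c_nroot; rewrite /child eqxx /=; apply: contra_neq c_nroot => Ec.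
by apply: (@iter_parent_cycle 1).
Qed.

Lemma anc_child z c y : child c y -> anc z c -> z != c -> anc z y.
Proof. by move/child_parent <-; apply: anc_parent_neq. Qed.

Lemma child_anc_inj c c' y w : child c y -> child c' y -> anc c w -> anc c' w -> c = c'.
Proof.
move=> cy c'y cw c'w; case/orP: (anc_total cw c'w) => [cc'|c'c].
  by apply: contraNeq (child_nanc cy) => /(anc_child c'y cc').
by apply: esym; apply: contraNeq (child_nanc c'y) => /(anc_child cy c'c).
Qed.

Lemma iter_child_lt c r y i j : child c r ->
  iter i parent y = r -> iter j parent y = c -> i > j.
Proof.
move=> cr Ei Ej; rewrite ltnNge; apply/negP=> ij.
have Er : iter (j - i).+1 parent r = r.
  by rewrite iterS -Ei -iterD subnK // Ej (child_parent cr).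
have r_root := iter_parent_cycle (ltn0Sn _) Er.
move: (child_neq_root cr); rewrite -Ej -(subnK ij) iterD Ei r_root.
by rewrite iter_parent_root eqxx.
Qed.

Lemma anc_exit_down A a b : a \in A -> b \notin A -> anc a b ->
  exists y c, [/\ y \in A, c \notin A, child c y, anc a y & anc c b].
Proof.
move=> aA bA /ancP [j]; elim: j b bA => [|j IH] b bA Ej.
  by move: Ej => /= Eb; rewrite Eb aA in bA.
rewrite iterSr in Ej.
have b_nroot : b != root.
  by apply: contraNneq bA => Eb; move: aA; rewrite -Ej Eb parent_root iter_parent_root.
case pbA : (parent b \in A).
  exists (parent b), b; split; rewrite ?anc_refl ?parent_child //.
  by apply/ancP; exists j.
have [y [c [yA cA cy ay cb]]] := IH _ (negbT pbA) Ej.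
by exists y, c; split=> //; apply: anc_of_parent.
Qed.

Lemma anc_exit_up A a b : a \in A -> b \notin A -> anc b a ->
  exists y, [/\ y \in A, parent y \notin A, anc b y & anc y a].
Proof.
move=> aA bA /ancP [j]; elim: j a aA => [|j IH] a aA Ej.
  by move: Ej => /= Eb; rewrite -Eb aA in bA.
rewrite iterSr in Ej.
case paA : (parent a \in A).
  have [y [yA pyA by' ya]] := IH _ paA Ej.
  by exists y; split=> //; apply: anc_trans ya (anc_parent a).
by exists a; split; rewrite ?paA ?anc_refl //; apply/ancP; exists j.+1; rewrite iterSr.
Qed.

Lemma relA_sym A : symmetric (relA parent A).
Proof. by move=> x y; rewrite /relA /adj orbC andbCA. Qed.

Lemma connect_relA_sym A x y : connect (relA parent A) x y = connect (relA parent A) y x.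
Proof. exact: (sym_connect_sym (relA_sym A)). Qed.

Lemma connect_anc A a b : anc a b ->
  (forall z, anc a z -> anc z b -> z \in A) -> connect (relA parent A) a b.
Proof.
move=> /ancP [j]; elim: j b => [|j IH] b Ej Hab.
  by move: Ej => /= ->; apply: connect0.
rewrite iterSr in Ej.
case: (eqVneq b root) => [Eb|b_nroot].
  by move: Ej; rewrite Eb parent_root iter_parent_root => ->.
have apb : anc a (parent b) by apply/ancP; exists j.
have ab := anc_of_parent apb.
apply: (@connect_trans _ _ (parent b)).
  by apply: IH => // z az zpb; apply: Hab => //; apply: anc_of_parent.
apply: connect1; apply/and3P; split; first exact: Hab apb (anc_parent b).
  exact: Hab ab (anc_refl b).
by rewrite /adj parent_child ?orbT.
Qed.

Definition connected A := {in A &, forall a b, connect (relA parent A) a b}.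

Lemma connected_convex R a b y : connected R -> a \in R -> b \in R ->
  anc a y -> anc y b -> y \in R.
Proof.
move=> cR aR bR ay yb; case: (eqVneq a y) => [<- //|a_neq_y].
have nya : ~~ anc y a by apply: contra_neqN a_neq_y => ya; apply: anc_antisym.
have /connectP [p pth Ea] := cR _ _ bR aR.
elim: p b bR yb pth Ea => [|t p IH] s sR ys /= pth Ea; first by rewrite Ea ys in nya.
case/andP: pth => /and3P [_ tR st] pth.
case yt : (anc y t); first exact: IH pth Ea.
case/orP: st => [ts|st].
  case: (eqVneq y s) => [-> //|ys'].
  by move: (anc_parent_neq ys ys'); rewrite (child_parent ts) yt.
by move: (anc_trans ys (child_anc st)); rewrite yt.
Qed.

Lemma connected_top R r : connected R -> r \in R -> (parent r \in R -> r = root) ->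
  {in R, forall w, anc r w}.
Proof.
move=> cR rR top w wR; have /connectP [p pth ->] := cR _ _ rR wR.
suff walk q s : path (relA parent R) s q -> anc r s -> anc r (last s q).
  exact: walk pth (anc_refl r).
elim: q s {pth} => [|t q IH] s //= /andP [/and3P [_ tR st] pth] rs.
apply: IH pth _; case/orP: st => [st|ts]; last exact: anc_trans rs (child_anc ts).
case: (eqVneq r s) => [Es|r_neq]; last by rewrite -(child_parent st) anc_parent_neq.
by move: tR; rewrite -(child_parent st) -Es => /top ->; rewrite parent_root anc_refl.
Qed.

Lemma connected_has_top R a : connected R -> a \in R ->
  exists2 r, r \in R & {in R, forall w, anc r w}.
Proof.
move=> cR aR; case rootR : (root \in R).
  by exists root => // w _; apply: anc_root.
have [y [yR pyR _ _]] := anc_exit_up aR (negbT rootR) (anc_root a).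
by exists y => //; apply: connected_top => // pyR'; rewrite pyR' in pyR.
Qed.

Lemma rtE R r : r \in R -> {in R, forall w, anc r w} -> rt root parent R = r.
Proof.
move=> rR top; rewrite /rt; case: pickP => [v /andP [vR /forall_inP vtop] | none] /=.
  exact: anc_antisym (vtop _ rR) (top _ vR).
by move: (none r); rewrite rR /=; move/negbT/negP; case; apply/forall_inP.
Qed.

Definition between a b w := (anc a w && anc w b) || (anc b w && anc w a).

Lemma connected_between R a b w : connected R -> a \in R -> b \in R ->
  between a b w -> w \in R.
Proof.
move=> cR aR bR /orP [] /andP [x1 x2]; first exact: connected_convex x1 x2.
exact: connected_convex bR aR x1 x2.
Qed.

Section Components.
Variable A : {set 'I_n}.
Local Notation comps := (comps parent A).

Lemma comps_sub X : X \in comps -> X \subset A.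
Proof.
case/imsetP=> x xA -> {X}; apply/subsetP=> y; rewrite inE => /connectP [p pth ->].
by elim: p x xA pth => //= t p IH s sA /andP [/and3P [_ tA _]]; apply: IH.
Qed.

Lemma comps_connect X x y : X \in comps -> x \in X -> connect (relA parent A) x y -> y \in X.
Proof. by case/imsetP=> z _ -> {X}; rewrite !inE; apply: connect_trans. Qed.

Lemma comps_adj X x y : X \in comps -> x \in X -> y \in A -> adj x y -> y \in X.
Proof.
move=> XA xX yA xy; apply: (comps_connect XA xX (connect1 _)).
by rewrite /relA yA xy (subsetP (comps_sub XA)).
Qed.

Lemma comps_eq X Y w : X \in comps -> Y \in comps -> w \in X -> w \in Y -> X = Y.
Proof.
move=> /imsetP [x _ ->] /imsetP [y _ ->]; rewrite !inE => xw yw; apply/setP=> z.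
rewrite !inE; apply/idP/idP => [xz|yz].
  by apply: connect_trans yw _; apply: connect_trans _ xz; rewrite connect_relA_sym.
by apply: connect_trans xw _; apply: connect_trans _ yz; rewrite connect_relA_sym.
Qed.

Lemma comps_connected X : X \in comps -> connected X.
Proof.
move=> XA a b aX bX.
have /connectP [p pth ->] : connect (relA parent A) a b.
  case/imsetP: XA aX bX => x _ ->; rewrite !inE => xa xb.
  by apply: connect_trans xb; rewrite connect_relA_sym.
apply/connectP; exists p => //; elim: p a aX pth {bX} => //= t p IH s sX.
case/andP=> st pth; have tX := comps_connect XA sX (connect1 st).
by rewrite IH // andbT /relA sX tX; case/and3P: st.
Qed.

Lemma comps_nonempty X : X \in comps -> exists x, x \in X.
Proof. by case/imsetP=> x _ ->; exists x; rewrite inE connect0. Qed.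

End Components.

Lemma mem_compsD R B X x : X \in comps parent (R :\: B) -> x \in X -> x \in R /\ x \notin B.
Proof. by move=> XA /(subsetP (comps_sub XA)) /setDP. Qed.

Section Leftmost.
Variable c1 : 'I_n -> 'I_n.
Hypothesis leftmost : leftmost_ok parent c1.

Definition leftmost_path a b :=
  forall z, anc a z -> anc z b -> z != b -> child (c1 z) z /\ anc (c1 z) b.

Lemma leftmost_path_refl a : leftmost_path a a.
Proof. by move=> z az za; rewrite (anc_antisym za az) eqxx. Qed.

Lemma leftmost_path_suffix a a' b : anc a a' -> leftmost_path a b -> leftmost_path a' b.
Proof. by move=> aa' lab z a'z; apply: lab; apply: anc_trans aa' a'z. Qed.

Lemma leftmost_path_cons v c : child (c1 v) v -> anc (c1 v) c ->
  leftmost_path (c1 v) c -> leftmost_path v c.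
Proof.
move=> cv c1c lc z vz zc z_neq; case: (eqVneq z v) => [->|z_neq_v]; first by [].
apply: lc => //; case/orP: (anc_total zc c1c) => // zc1.
case: (eqVneq z (c1 v)) => [->|z_neq_c1]; first exact: anc_refl.
by case/negP: z_neq_v; apply/eqP/anc_antisym; first exact: anc_child cv zc1 z_neq_c1.
Qed.

Lemma leftmost_path_parent z0 c y : child c y -> anc z0 c -> z0 != c ->
  leftmost_path z0 c -> [/\ c1 y = c, anc z0 y & leftmost_path z0 y].
Proof.
move=> cy z0c z0_neq lc; have z0y := anc_child cy z0c z0_neq.
have y_neq : y != c by rewrite eq_sym (child_neq cy).
have [c1y c1c] := lc y z0y (child_anc cy) y_neq.
split=> // [|z z0z zy z_neq]; first exact: child_anc_inj c1y cy c1c (anc_refl c).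
have zc := anc_trans zy (child_anc cy).
have z_neq_c : z != c by apply: contraNneq (child_nanc cy) => <-.
have [c1z c1zc] := lc z z0z zc z_neq_c; split=> //; apply: (anc_child cy c1zc).
by apply: contra_neq z_neq => Ec; rewrite -(child_parent c1z) Ec (child_parent cy).
Qed.

Lemma lnext_some R v w : lnext parent c1 R v = Some w ->
  [/\ w = c1 v, child (c1 v) v & c1 v \in R].
Proof. by rewrite /lnext; case: ifP => // /andP [/leftmost [-> _] ->] [<-]. Qed.

Lemma firstbal_spec num den R f v c : firstbal parent c1 num den R f v = Some c ->
  [/\ c \in R, anc v c & leftmost_path v c].
Proof.
elim: f v => //= f IH v; case: ifP => // /negbFE vR.
case: ifP => [_ [<-]|_]; first by rewrite anc_refl; split=> //; apply: leftmost_path_refl.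
case E: lnext => [w|] // /IH [cR wc lwc].
have [Ew c1v _] := lnext_some E; rewrite Ew in wc lwc.
split=> //; first exact: anc_trans (child_anc c1v) wc.
exact: leftmost_path_cons.
Qed.

Lemma lastl_spec R f v :
  anc v (lastl parent c1 R f v) /\ leftmost_path v (lastl parent c1 R f v).
Proof.
elim: f v => [|f IH] v /=; first by rewrite anc_refl; split=> //; apply: leftmost_path_refl.
case E: lnext => [w|]; last by rewrite anc_refl; split=> //; apply: leftmost_path_refl.
have [-> c1v _] := lnext_some E; have [wl lwl] := IH (c1 v).
by split; [apply: anc_trans (child_anc c1v) wl | apply: leftmost_path_cons].
Qed.

Lemma lastl_in R f v : v \in R -> lastl parent c1 R f v \in R.
Proof.
elim: f v => //= f IH v vR; case E: lnext => [w|] //.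
by have [-> _ c1R] := lnext_some E; apply: IH.
Qed.

Lemma lastl_reach X r y : c1 y \notin X -> anc r y -> leftmost_path r y ->
  (forall z, anc r z -> anc z y -> z \in X) -> lastl parent c1 X n r = y.
Proof.
move=> c1y /hasP [i]; rewrite mem_iota add0n => /andP [_ /ltnW le_in] /eqP.
suff reach f : forall i r, i <= f -> iter i parent y = r -> leftmost_path r y ->
    (forall z, anc r z -> anc z y -> z \in X) -> lastl parent c1 X f r = y.
  exact: reach.
clear le_in; elim: f => [|f IH] {}i {}r le_if Ei lry inX.
  by move: le_if Ei; rewrite leqn0 => /eqP -> <-.
case: (eqVneq r y) => [->|r_neq]; first by rewrite /= /lnext (negbTE c1y) andbF.
have ry : anc r y by apply/ancP; exists i.
have [c1r c1ry] := lry r (anc_refl r) ry r_neq.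
have c1rX : c1 r \in X := inX _ (child_anc c1r) c1ry.
have -> : lastl parent c1 X f.+1 r = lastl parent c1 X f (c1 r).
  have hc : haschild parent r by apply/existsP; exists (c1 r).
  by rewrite /= /lnext hc c1rX.
case/ancP: c1ry => j Ej; apply: (IH j) => //.
- by rewrite -ltnS (leq_trans (iter_child_lt c1r Ei Ej)).
- exact: leftmost_path_suffix (child_anc c1r) lry.
- by move=> z c1z zy; apply: inX zy; apply: anc_trans (child_anc c1r) c1z.
Qed.

Lemma rt_subR R w : w \in R -> rt root parent (subR parent R w) = w.
Proof.
move=> wR; apply: rtE => [|x]; first by rewrite !inE wR anc_refl.
by rewrite !inE => /andP [].
Qed.

Lemma CVf_sub num den f R : CVf root parent c1 num den f R \subset R.
Proof.
elim: f R => [|f IH] R /=; first exact: sub0set.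
case E: firstbal => [b|]; last exact: sub0set.
have [bR _ _] := firstbal_spec E; rewrite subUset sub1set bR /=.
apply/bigcupsP=> w /andP [wR _]; apply: subset_trans (IH _) _.
by apply/subsetP=> x; rewrite inE => /andP [].
Qed.

Lemma CVf_leftmost num den f R c : c \in CVf root parent c1 num den f R ->
  exists z0, [/\ anc z0 c, leftmost_path z0 c &
    z0 = rt root parent R \/ parent z0 \in CVf root parent c1 num den f R].
Proof.
elim: f R c => [|f IH] R c /=; first by rewrite inE.
case E: firstbal => [b|]; last by rewrite inE.
have [bR rb lb] := firstbal_spec E.
case/setU1P=> [->|/bigcupP [w /andP [wR wb] cC]]; first by exists (rt root parent R); split=> //; left.
have [z0 [z0c lz0 [Ez0|pz0]]] := IH _ _ cC; exists z0; split=> //; right.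
  by rewrite Ez0 rt_subR // (child_parent wb) setU11.
by rewrite setU1r //; apply/bigcupP; exists w; rewrite ?wR.
Qed.

Section Clusters.
Variable k : nat.
Local Notation CR := (CR root parent c1 k).
Local Notation rt := (rt root parent).
Local Notation lR := (lR root parent c1).

Definition exits_at_lR R := forall y c, y \in R -> child c y -> c \notin R -> y = lR R.

Definition cluster R := [/\ exists a, a \in R, connected R & exits_at_lR R].

Lemma cluster_rt R : cluster R -> rt R \in R /\ {in R, forall w, anc (rt R) w}.
Proof. by case=> [[a aR] cR _]; have [r rR top] := connected_has_top cR aR; rewrite (rtE rR top). Qed.

Lemma rt_in_CR R : rt R \in R -> rt R \in CR R.
Proof. by rewrite /CR; case: ifP => // _ _; rewrite !inE eqxx !orbT. Qed.

Lemma top_in_CR R y : connected R -> y \in R -> (parent y \in R -> y = root) -> y \in CR R.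
Proof.
move=> cR yR top; have Ey := rtE yR (connected_top cR yR top).
by rewrite -Ey rt_in_CR ?Ey.
Qed.

Lemma exit_in_CR R y c : cluster R -> y \in R -> child c y -> c \notin R -> y \in CR R.
Proof.
case=> _ _ exits yR cy cR; rewrite /CR; case: ifP => // _.
by rewrite (exits _ _ yR cy cR) !inE eqxx !orbT.
Qed.

Lemma CR_sub R : cluster R -> CR R \subset R.
Proof.
move=> clR; have [rtR _] := cluster_rt clR; rewrite /CR; case: ifP => // _.
by rewrite !subUset CVf_sub !sub1set rtR lastl_in.
Qed.

Lemma cluster_setT : cluster setT.
Proof.
split=> [|a b _ _|y c _ _]; [by exists root; rewrite inE | | by rewrite inE].
apply: (@connect_trans _ _ root); last by apply: connect_anc (anc_root b) _ => z; rewrite inE.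
by rewrite connect_relA_sym; apply: connect_anc (anc_root a) _ => z; rewrite inE.
Qed.

Lemma CR_leftmost R c : ~~ (#|R| <= 2 * k + 2) -> c \in CR R ->
  exists z0, [/\ anc z0 c, leftmost_path z0 c & z0 = rt R \/ parent z0 \in CR R].
Proof.
rewrite /CR /= => /negbTE -> /setUP [/CVf_leftmost [z0 [z0c lz0 Ez0]]|/set2P [->|->]].
- by exists z0; split=> //; case: Ez0 => [|pz0]; [left | right; rewrite !inE pz0].
- by exists (rt R); have [? ?] := lastl_spec R n (rt R); split=> //; left.
- by exists (rt R); rewrite anc_refl; split=> //; [apply: leftmost_path_refl | left].
Qed.

(* A child [c] of [y] outside [X] must lie in C_R; the leftmost path into [c]
   given by [CR_leftmost] then starts above rt(X) and runs inside [X] down to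
   [y], so [y] is l(X). *)
Lemma cluster_comps R X : cluster R -> X \in comps parent (R :\: CR R) -> cluster X.
Proof.
move=> clR XA; have cX := comps_connected XA; have [a aX] := comps_nonempty XA.
split=> [|//|y c yX cy cX']; first by exists a.
have XD := mem_compsD XA.
have [yR yC] := XD _ yX; have [rtR top] := cluster_rt clR.
have cC : c \in CR R.
  case cR : (c \in R); last by rewrite (exit_in_CR clR yR cy (negbT cR)) in yC.
  apply: contraNT cX' => cC; apply: (comps_adj XA yX); first by rewrite inE cC cR.
  by rewrite /adj cy orbT.
have big : ~~ (#|R| <= 2 * k + 2) by apply: contra yC => small; rewrite /CR /= small.
have [z0 [z0c lz0 Ez0]] := CR_leftmost big cC.
have z0_neq : z0 != c.
  case: Ez0 => [->|pz0]; last by apply: contraTneq pz0 => ->; rewrite (child_parent cy).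
  by apply: contraNneq (child_nanc cy) => <-; apply: top.
have [c1y z0y lz0y] := leftmost_path_parent cy z0c z0_neq lz0.
have [r rX topX] := connected_has_top cX aX; have ry := topX _ yX.
have z0r : anc z0 r.
  case/orP: (anc_total z0y ry) => // rz0; case: (eqVneq r z0) => [->|r_neq].
    exact: anc_refl.
  case: Ez0 => [Ez0|pz0].
    move: r_neq; rewrite (anc_antisym rz0) ?eqxx // Ez0.
    exact: top (XD _ rX).1.
  have pz0X : parent z0 \in X.
    apply: (connected_convex cX rX yX (anc_parent_neq rz0 r_neq)).
    exact: anc_trans (anc_parent z0) z0y.
  by have [_] := XD _ pz0X; rewrite pz0.
rewrite /lR (rtE rX topX); apply/esym/lastl_reach => //; first by rewrite c1y.
  exact: leftmost_path_suffix z0r lz0y.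
by move=> z rz zy; apply: connected_convex cX rX yX rz zy.
Qed.

Lemma canonical_cluster R : canonical root parent c1 k R -> cluster R.
Proof. by elim=> [|Q X _ clQ XA]; [apply: cluster_setT | apply: cluster_comps clQ XA]. Qed.

Definition route_step_spec R u v u' :=
  [/\ v \notin R -> between u v u',
      v \notin R -> u' \notin R /\ exists2 x, x \in R & adj x u'
    & forall Y, Y \in comps parent (R :\: CR R) -> v \in Y -> u' \in CR Y].

Lemma case1_spec R u v u' : cluster R -> u \in CR R -> anc u v ->
  case1 parent (CR R) u v u' -> route_step_spec R u v u'.
Proof.
move=> clR uC uv [x [xC xv deepest u'x u'v]].
have [_ cR _] := clR; have CRsub := subsetP (CR_sub clR); have uR := CRsub _ uC.
have uu' := anc_trans (deepest _ uC uv) (child_anc u'x).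
have avoid z : anc u' z -> z \in CR R -> anc z v -> False.
  by move=> u'z zC zv; case/negP: (child_nanc u'x); apply: anc_trans u'z (deepest _ zC zv).
split=> [_|vR|Y YA vY]; first by rewrite /between uu' u'v.
  split; last by exists x; rewrite ?CRsub // /adj u'x orbT.
  apply/negP=> u'R; have [y [c [yR cR' cy u'y cv]]] := anc_exit_down u'R vR u'v.
  exact: avoid u'y (exit_in_CR clR yR cy cR') (anc_trans (child_anc cy) cv).
have [vR _] := mem_compsD YA vY.
have u'Y : u' \in Y.
  apply: (comps_connect YA vY); rewrite connect_relA_sym; apply: connect_anc u'v _ => z u'z zv.
  rewrite inE (connected_convex cR uR vR (anc_trans uu' u'z) zv) andbT.
  by apply/negP=> zC; apply: avoid u'z zC zv.
apply: top_in_CR (comps_connected YA) u'Y _ => pu'Y.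
by have [_] := mem_compsD YA pu'Y; rewrite (child_parent u'x) xC.
Qed.

Lemma case2_spec R u v u' : cluster R -> u \in CR R ->
  case2 parent (CR R) u v u' -> route_step_spec R u v u'.
Proof.
move=> clR uC [x [xC vx xu highest ->]].
have [_ cR _] := clR; have CRsub := subsetP (CR_sub clR).
have uR := CRsub _ uC; have pxu := anc_trans (anc_parent x) xu.
have below_x : v != x -> [/\ anc v (parent x), child x (parent x) &
    forall z, anc z (parent x) -> z \in CR R -> anc v z -> False].
  move=> v_neq; have x_nroot : x != root.
    by apply: contra_neq v_neq => Ex; rewrite Ex; apply: anc_root_eq; rewrite -Ex.
  split; [exact: anc_parent_neq | exact: parent_child |] => z zp zC vz.
  have xz := highest _ zC vz (anc_trans zp pxu).
  by move: x_nroot; rewrite (anc_parent_self (anc_trans xz zp)) eqxx.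
have v_neq : v \notin R -> v != x by move=> vR; apply: contraNneq vR => ->; apply: CRsub.
split=> [vR|vR|Y YA vY].
- by have [vp _ _] := below_x (v_neq vR); rewrite /between vp pxu orbT.
- have [vp xp avoid] := below_x (v_neq vR); split; last by exists x; rewrite ?CRsub // /adj xp.
  apply/negP=> pR; have [y [yR pyR vy yp]] := anc_exit_up pR vR vp.
  apply: avoid yp (top_in_CR cR yR _) vy => pyR'.
  by rewrite pyR' in pyR.
have [vR vC] := mem_compsD YA vY.
have v_neq_x : v != x by apply: contraNneq vC => ->.
have [vp xp avoid] := below_x v_neq_x.
have pY : parent x \in Y.
  apply: (comps_connect YA vY); apply: connect_anc vp _ => z vz zp.
  rewrite inE (connected_convex cR vR uR vz (anc_trans zp pxu)) andbT.
  by apply/negP=> zC; apply: avoid zp zC vz.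
have xY : x \notin Y by apply/negP=> /(mem_compsD YA) [_]; rewrite xC.
exact: exit_in_CR (cluster_comps clR YA) pY xp xY.
Qed.

Lemma route_step R u v u' : cluster R -> u \in CR R ->
  route parent (CR R) u v u' -> route_step_spec R u v u'.
Proof.
move=> clR uC; rewrite /route; case: ifP => [uv|_]; first exact: case1_spec.
by case: ifP => // _; apply: case2_spec.
Qed.

Section Sequences.
Variable ord : {set 'I_n} -> seq {set 'I_n}.
Hypothesis ord_comps : ord_ok root parent c1 k ord.
Local Notation seqOf := (seqOf root parent c1 k ord).

Lemma seqOf_canonical R S : seqOf R S -> canonical root parent c1 k R.
Proof. by elim=> [|Q X S0 _ canQ XA]; [apply: canT | apply: canC canQ XA]. Qed.

Lemma seqOf_cluster R S : seqOf R S -> cluster R.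
Proof. by move/seqOf_canonical/canonical_cluster. Qed.

Lemma seqOf_CR_mem R S u : seqOf R S -> u \in CR R -> u \in R.
Proof. by move/seqOf_cluster/CR_sub/subsetP; apply. Qed.

Lemma seqOf_nil R : seqOf R [::] -> R = setT.
Proof. by move E: [::] => S H; case: H E => // Q X S0 _ _; case: S0. Qed.

Lemma seqOf_rcons R S j : seqOf R (rcons S j) ->
  exists Q, [/\ seqOf Q S, R \in comps parent (Q :\: CR Q) & j = (index R (ord Q)).+1].
Proof.
move E: (rcons S j) => S' H; case: H E => [|Q X S0 HQ XA]; first by case: S.
by case/rcons_inj=> -> ->; exists Q.
Qed.

Lemma seqOf_inj R1 R2 S : seqOf R1 S -> seqOf R2 S -> R1 = R2.
Proof.
elim/last_ind: S R1 R2 => [|S j IH] R1 R2; first by move=> /seqOf_nil -> /seqOf_nil ->.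
case/seqOf_rcons=> Q [HQ XA1 ->] /seqOf_rcons [Q' [HQ' XA2 [Ej]]].
rewrite -(IH _ _ HQ HQ') in XA2 Ej; have [_ memQ] := ord_comps (seqOf_canonical HQ).
by rewrite -(nth_index R1 (_ : R1 \in ord Q)) ?memQ // Ej nth_index ?memQ.
Qed.

Lemma seqOf_prefix R' S' S : seqOf R' S' -> prefix S S' ->
  exists R, [/\ seqOf R S, R' \subset R & S != S' -> R' \subset R :\: CR R].
Proof.
move=> H; elim: H S => [|R X S0 HR IH XA] S pS.
  by move: pS; rewrite prefixs0 => /eqP ->; exists setT; rewrite eqxx; split=> //; apply: seqT.
have XD := comps_sub XA; have XR := subset_trans XD (subsetDl R (CR R)).
case/prefix_rcons_case: pS => [->|pS]; first by exists X; rewrite eqxx; split=> //; apply: seqC.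
case: (eqVneq S S0) => [->|S_neq]; first by exists R.
have [R0 [H0 RR0 sub0]] := IH _ pS; exists R0; split=> //; first exact: subset_trans XR RR0.
by move=> _; apply: subset_trans XR (sub0 S_neq).
Qed.

Lemma seqOf_pprefix_CR Ra Sa Rb Sb w : seqOf Ra Sa -> seqOf Rb Sb ->
  pprefix Sa Sb -> w \in Rb -> w \notin CR Ra.
Proof.
move=> Ha Hb /andP [pab nab] wb; have [R0 [H0 _ sub]] := seqOf_prefix Hb pab.
by rewrite -(seqOf_inj H0 Ha); have /setDP [] := subsetP (sub nab) _ wb.
Qed.

Lemma seqOf_diverge R1 S1 R2 S2 (P : seq nat) (a b : nat) (s1 s2 : seq nat) :
  seqOf R1 S1 -> seqOf R2 S2 -> S1 = P ++ a :: s1 -> S2 = P ++ b :: s2 -> a != b ->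
  exists Q Y1 Y2, [/\ Y1 \in comps parent (Q :\: CR Q), Y2 \in comps parent (Q :\: CR Q),
    R1 \subset Y1, R2 \subset Y2 & Y1 != Y2].
Proof.
move=> H1 H2 E1 E2 ab.
have pa : prefix (rcons P a) S1 by rewrite E1 -cat_rcons prefix_prefix.
have pb : prefix (rcons P b) S2 by rewrite E2 -cat_rcons prefix_prefix.
have [Y1 [/seqOf_rcons [Q [HQ XA1 Ea]] sub1 _]] := seqOf_prefix H1 pa.
have [Y2 [/seqOf_rcons [Q' [HQ' XA2 Eb]] sub2 _]] := seqOf_prefix H2 pb.
rewrite -(seqOf_inj HQ HQ') in XA2 Eb; exists Q, Y1, Y2; split=> //.
by apply: contra_neq ab => EY; rewrite Ea Eb EY.
Qed.

Lemma seqOf_laminar R1 S1 R2 S2 w : seqOf R1 S1 -> seqOf R2 S2 ->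
  w \in R1 -> w \in R2 -> prefix S1 S2 || prefix S2 S1.
Proof.
move=> H1 H2 w1 w2; case: (boolP (prefix S1 S2)) => //= p12.
apply/negPn/negP=> p21; have [a [b [s1 [s2 [ab E1 E2]]]]] := lcp_diverge p12 p21.
have [Q [Y1 [Y2 [XA1 XA2 sub1 sub2]]]] := seqOf_diverge H1 H2 E1 E2 ab.
by case/eqP; apply: comps_eq XA1 XA2 (subsetP sub1 _ w1) (subsetP sub2 _ w2).
Qed.

Lemma seqOf_CR_uniq R1 S1 R2 S2 u : seqOf R1 S1 -> seqOf R2 S2 ->
  u \in CR R1 -> u \in CR R2 -> S1 = S2.
Proof.
move=> H1 H2 u1 u2; have u1R := seqOf_CR_mem H1 u1; have u2R := seqOf_CR_mem H2 u2.
case: (eqVneq S1 S2) => // S_neq; case/orP: (seqOf_laminar H1 H2 u1R u2R) => p.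
  by rewrite (negbTE (seqOf_pprefix_CR H1 H2 _ u2R)) ?/pprefix ?p in u1.
by rewrite (negbTE (seqOf_pprefix_CR H2 H1 _ u1R)) ?/pprefix ?p ?(eq_sym S2) in u2.
Qed.

Lemma seqOf_exit_pprefix Ru Su Ru' Su' u' x : seqOf Ru Su -> seqOf Ru' Su' ->
  u' \in CR Ru' -> u' \notin Ru -> x \in Ru -> adj x u' -> pprefix Su' Su.
Proof.
move=> HU HU' u'C u'R xR xu'; have u'R' := seqOf_CR_mem HU' u'C.
case: (boolP (prefix Su' Su)) => [p|np].
  rewrite /pprefix p; apply: contraNneq u'R => E.
  by rewrite -(seqOf_inj HU' (_ : seqOf Ru Su')) // E.
case: (boolP (prefix Su Su')) => [p|np'].
  have [R0 [H0 sub _]] := seqOf_prefix HU' p.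
  by rewrite (seqOf_inj H0 HU) in sub; rewrite (subsetP sub _ u'R') in u'R.
have [a [b [s1 [s2 [ab E1 E2]]]]] := lcp_diverge np np'.
have [Q [Y1 [Y2 [XA1 XA2 sub1 sub2]]]] := seqOf_diverge HU' HU E1 E2 ab.
have u'Y1 := subsetP sub1 _ u'R'.
have u'Y2 := comps_adj XA2 (subsetP sub2 _ xR) (subsetP (comps_sub XA1) _ u'Y1) xu'.
by case/eqP; apply: comps_eq XA1 XA2 u'Y1 u'Y2.
Qed.

Section Routing.
Variables (u v u' : 'I_n) (Ru Rv Ru' : {set 'I_n}) (Su Sv Su' : seq nat).
Hypotheses (HU : seqOf Ru Su) (uC : u \in CR Ru) (HV : seqOf Rv Sv) (vC : v \in CR Rv).
Hypotheses (HU' : seqOf Ru' Su') (u'C : u' \in CR Ru').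
Hypothesis step : route_step_spec Ru u v u'.

Lemma mem_Ru_prefix : v \in Ru -> prefix Su Sv.
Proof.
move=> vRu; case/orP: (seqOf_laminar HU HV vRu (seqOf_CR_mem HV vC)) => // pvu.
case: (eqVneq Sv Su) => [->|ne]; first exact: prefix_refl.
have pp : pprefix Sv Su by rewrite /pprefix pvu ne.
by case/negP: (seqOf_pprefix_CR HV HU pp vRu).
Qed.

Lemma step_descends : pprefix Su Sv -> size Su < size Su' /\ (Su' = Sv \/ pprefix Su' Sv).
Proof.
case/andP=> /prefixP [[|j s] ES] S_neq; first by rewrite ES cats0 eqxx in S_neq.
have pj : prefix (rcons Su j) Sv by rewrite ES -cat_rcons prefix_prefix.
have [Y [HY sub _]] := seqOf_prefix HV pj; have [Q [HQ YA _]] := seqOf_rcons HY.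
rewrite (seqOf_inj HQ HU) in YA.
have [_ _ enters] := step; have u'Y := enters _ YA (subsetP sub _ (seqOf_CR_mem HV vC)).
rewrite (seqOf_CR_uniq HU' HY u'C u'Y) size_rcons ltnSn; split=> //.
by case: (eqVneq (rcons Su j) Sv) => [|ne]; [left | right; rewrite /pprefix pj ne].
Qed.

Lemma step_ascends P RP : seqOf RP P -> prefix P Su -> u \in RP -> v \in RP ->
  v \notin Ru -> size Su' < size Su /\ (Su' = P \/ pprefix P Su').
Proof.
move=> HP pP uP vP vRu; have [/(_ vRu) u'_on /(_ vRu) [u'Ru [x xRu xu']] _] := step.
have pp := seqOf_exit_pprefix HU HU' u'C u'Ru xRu xu'.
split; first exact: pprefix_size.
have [_ cP _] := seqOf_cluster HP; have u'P := connected_between cP uP vP u'_on.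
have pPu' : prefix P Su'.
  case/orP: (prefix_total pP (proj1 (andP pp))) => // pu'P.
  case: (eqVneq Su' P) => [->|ne]; first exact: prefix_refl.
  have pp' : pprefix Su' P by rewrite /pprefix pu'P ne.
  by case/negP: (seqOf_pprefix_CR HU' HP pp' u'P).
by case: (eqVneq Su' P) => [|ne]; [left | right; rewrite /pprefix pPu' eq_sym ne].
Qed.

Lemma step_ascends_to_v : pprefix Sv Su ->
  size Su' < size Su /\ (Su' = Sv \/ pprefix Sv Su').
Proof.
case/andP=> pvu ne.
have vRu : v \notin Ru by apply: contra ne => /mem_Ru_prefix puv; rewrite (prefix_antisym pvu puv).
have [R0 [H0 sub _]] := seqOf_prefix HU pvu; rewrite (seqOf_inj H0 HV) in sub.
exact: step_ascends HV pvu (subsetP sub _ (seqOf_CR_mem HU uC)) (seqOf_CR_mem HV vC) vRu.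
Qed.

Lemma step_ascends_to_lcp : size (lcp Su Sv) < minn (size Su) (size Sv) ->
  size Su' < size Su /\ (Su' = lcp Su Sv \/ pprefix (lcp Su Sv) Su').
Proof.
move=> lt_lcp; have vRu : v \notin Ru.
  by apply: contraTN lt_lcp => /mem_Ru_prefix /lcp_prefixE ->; rewrite leq_min ltnn.
case/andP: (lcp_prefix Su Sv) => pu pv.
have [R0 [H0 sub0 _]] := seqOf_prefix HU pu; have [R1 [H1 sub1 _]] := seqOf_prefix HV pv.
rewrite (seqOf_inj H1 H0) in sub1.
apply: step_ascends H0 pu (subsetP sub0 _ (seqOf_CR_mem HU uC)) _ vRu.
exact: subsetP sub1 _ (seqOf_CR_mem HV vC).
Qed.

End Routing.
End Sequences.
End Clusters.
End Leftmost.
End Tree.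

Theorem lemma13 (n : nat) (root : 'I_n) (parent c1 : 'I_n -> 'I_n) (k : nat)
  (ord : {set 'I_n} -> seq {set 'I_n}) :
  is_tree root parent -> leftmost_ok parent c1 -> 4 <= k ->
  ord_ok root parent c1 k ord ->
  forall (u v u' : 'I_n) (Ru Rv Ru' : {set 'I_n}) (Su Sv Su' : seq nat),
  u != v ->
  seqOf root parent c1 k ord Ru Su -> u \in CR root parent c1 k Ru ->
  seqOf root parent c1 k ord Rv Sv -> v \in CR root parent c1 k Rv ->
  seqOf root parent c1 k ord Ru' Su' -> u' \in CR root parent c1 k Ru' ->
  route parent (CR root parent c1 k Ru) u v u' ->
  [/\ (pprefix Su Sv ->
        size Su < size Su' /\ (Su' = Sv \/ pprefix Su' Sv)),
      (pprefix Sv Su ->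
        size Su' < size Su /\ (Su' = Sv \/ pprefix Sv Su'))
    & (size (lcp Su Sv) < minn (size Su) (size Sv) ->
        size Su' < size Su /\
        (Su' = lcp Su Sv \/ pprefix (lcp Su Sv) Su'))].
Proof.
move=> tree leftmost _ ord_comps u v u' Ru Rv Ru' Su Sv Su' _ HU uC HV vC HU' u'C.
move=> /(route_step tree leftmost (seqOf_cluster tree leftmost HU) uC) step.
split.
- exact (step_descends tree leftmost ord_comps HU HV vC HU' u'C step).
- exact (step_ascends_to_v tree leftmost ord_comps HU uC HV vC HU' u'C step).
- exact (step_ascends_to_lcp tree leftmost ord_comps HU uC HV vC HU' u'C step).
Qed.
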